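(* Let $\mu$ be a valuated matroid on $[n]$. (i) Let $f=(f_1,f_2):[n]\cup\{o\}\to([n]\cup\{o\})\times\mathbb{T}$ be a map with $f_1(i)=i$ for all $i$, and assume that for every $i\in[n]$ there is $k\in K$ with $f_2(i)=\mathrm{val}(k)$. Then for the associated weakly monomial matrix $A_f$, $\overline{\operatorname{trop}}(f^{-1}(\mu))=\mathrm{val}(A_f)\odot\overline{\operatorname{trop}}(\mu)$. (ii) Conversely, if $A_f\in K^{n\times n}$ is a full-rank diagonal matrix, its associated map $f$ satisfies $\overline{\operatorname{trop}}(f^{-1}(\mu))=\mathrm{val}(A_f)\odot\overline{\operatorname{trop}}(\mu)$.
   Context: $K$ is a field with non-Archimedean valuation $\mathrm{val}:K\to\mathbb{T}=\mathbb{R}\cup\{\infty\}$; $(\mathrm{val}(M)\odot v)_i=\min_j(\mathrm{val}(M_{ij})+v_j)$, applied pointwise to sets. Valuated matroid of rank $r$ on finite $E$: $\nu:\binom{E}{r}\to\mathbb{T}$, not identically $\infty$, with exchange property (for all $I,J$, $i\in I\setminus J$ there is $j\in J\setminus I$ with $\nu(I)+\nu(J)\ge\nu((I\setminus i)\cup j)+\nu((J\setminus j)\cup i)$), up to additive constants; $\overline{\operatorname{trop}}(\nu)\subseteq\mathbb{P}(\mathbb{T}^E)$ is the set of $x$ with $\min_e(C_\nu(I)_e+x_e)$ attained at least twice for all $I\in\binom{E}{r+1}$ with $C_\nu(I)\ne(\infty,\dots)$, where $C_\nu(I)_e=\nu(I\setminus e)$ for $e\in I$, $\infty$ else. Pointed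 matroid $\mu_o$: $\mu$ extended to $[n]\cup\{o\}$ with $o$ a loop. With $S=f_1([n]\cup\{o\})$, $f^{-1}(\mu)(B)=\mu_o|_S(f_1(B))+\sum_{i\in B}f_2(i)$ where $\mu_o|_S$ is the restriction of $\mu_o$ to $S$ and $|B|$ equals its rank; $\overline{\operatorname{trop}}(f^{-1}(\mu))$ denotes the projection to the coordinates in $[n]$ of its tropical linear space. Associated matrix of $f$: $(A_f)_{ij}=k_i$ if $f_1(i)=j\in[n]$ with $\mathrm{val}(k_i)=f_2(i)$, and $0$ otherwise. Associated map of a weakly monomial matrix $M$ (at most one nonzero entry per row): $f(o)=(o,\infty)$; $f(i)=(o,\infty)$ if row $i$ is zero; $f(i)=(j,\mathrm{val}(M_{ij}))$ if $M_{ij}\ne0$. *)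

From HB Require Import structures.
From mathcomp Require Import all_boot all_order all_algebra.
From mathcomp Require Import reals.
Set Implicit Arguments. Unset Strict Implicit. Unset Printing Implicit Defensive.
Import Order.TTheory GRing.Theory Num.Theory.
Local Open Scope ring_scope.

(* ---------- The tropical numbers T = R u {oo}: None encodes oo ---------- *)
Section Trop.
Variable R : realType.

Definition tadd (a b : option R) : option R :=
  match a, b with Some x, Some y => Some (x + y) | _, _ => None end.

Definition tle (a b : option R) : bool :=
  match a, b with
  | _, None => true
  | None, Some _ => false
  | Some x, Some y => x <= y
  end.

Definition tmin (a b : option R) : option R := if tle a b then a else b.

Definition is_valuation (K : fieldType) (val : K -> option R) : Prop :=
  [/\ forall x, val x = None <-> x = 0,
      forall x y, val (x * y) = tadd (val x) (val y) &
      forall x y, tle (tmin (val x) (val y)) (val (x + y))].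

Definition min_twice (E : finType) (g : E -> option R) : Prop :=
  exists e1 e2, [/\ e1 != e2, g e1 = g e2 & forall e, tle (g e1) (g e)].

Definition valuated_matroid (E : finType) (r : nat) (nu : {set E} -> option R)
  : Prop :=
  (exists B : {set E}, #|B| = r /\ nu B <> None) /\
  forall I J : {set E}, #|I| = r -> #|J| = r -> forall i, i \in I :\: J ->
    exists2 j, j \in J :\: I &
      tle (tadd (nu ((I :\ i) :|: [set j])) (nu ((J :\ j) :|: [set i])))
          (tadd (nu I) (nu J)).

Definition circ (E : finType) (nu : {set E} -> option R) (I : {set E}) (e : E)
  : option R := if e \in I then nu (I :\ e) else None.

(* tropical linear space, as the cone of representatives in T^E minus the
   all-oo vector; its image in P(T^E) is \overline{trop}(nu) *)
Definition trop_space (E : finType) (r : nat) (nu : {set E} -> option R)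
  (x : E -> option R) : Prop :=
  (exists e, x e <> None) /\
  forall I : {set E}, #|I| = r.+1 -> (exists e, circ nu I e <> None) ->
    min_twice (fun e => tadd (circ nu I e) (x e)).

Definition tshift (E : Type) (c : R) (x : E -> option R) : E -> option R :=
  fun e => tadd (Some c) (x e).

Definition proj_eq (E : Type) (S1 S2 : (E -> option R) -> Prop) : Prop :=
  (forall x, S1 x -> exists c y, S2 y /\ forall e, x e = tshift c y e) /\
  (forall y, S2 y -> exists c x, S1 x /\ forall e, y e = tshift c x e).

(* [n] u {o} is option 'I_n, with o = None *)
Definition pointed (n r : nat) (mu : {set 'I_n} -> option R)
  (B : {set option 'I_n}) : option R :=
  if (None \in B) || (#|B| != r) then None
  else mu [set i | Some i \in B].

(* f^{-1}(mu)(B) = mu_o|_S (f_1(B)) + sum_{i in B} f_2(i).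
   Here S = f_1([n] u {o}); in the theorem f_1 = id so S is everything and
   mu_o|_S = mu_o. *)
Definition preimage (n r : nat) (mu : {set 'I_n} -> option R)
  (f1 : option 'I_n -> option 'I_n) (f2 : option 'I_n -> option R)
  (B : {set option 'I_n}) : option R :=
  tadd (pointed r mu (f1 @: B)) (\big[tadd/Some 0]_(i in B) f2 i).

Definition trop_act (K : fieldType) (val : K -> option R) (n : nat)
  (M : 'M[K]_n) (v : 'I_n -> option R) : 'I_n -> option R :=
  fun i => \big[tmin/None]_(j < n) tadd (val (M i j)) (v j).

Definition assoc_matrix (K : fieldType) (val : K -> option R) (n : nat)
  (f1 : option 'I_n -> option 'I_n) (f2 : option 'I_n -> option R)
  (A : 'M[K]_n) : Prop :=
  forall i j : 'I_n,
    (f1 (Some i) = Some j -> val (A i j) = f2 (Some i)) /\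
    (f1 (Some i) <> Some j -> A i j = 0).

Definition weakly_monomial (K : fieldType) (n : nat) (M : 'M[K]_n) : Prop :=
  forall i j j', M i j != 0 -> M i j' != 0 -> j = j'.

Definition assoc_map1 (K : fieldType) (n : nat) (M : 'M[K]_n)
  (i : option 'I_n) : option 'I_n :=
  match i with
  | None => None
  | Some i => if [pick j | M i j != 0] is Some j then Some j else None
  end.

Definition assoc_map2 (K : fieldType) (val : K -> option R) (n : nat)
  (M : 'M[K]_n) (i : option 'I_n) : option R :=
  match i with
  | None => None
  | Some i => if [pick j | M i j != 0] is Some j then val (M i j) else None
  end.

Definition is_diagonal (K : fieldType) (n : nat) (M : 'M[K]_n) : Prop :=
  forall i j, i != j -> M i j = 0.

End Trop.

(* For f1 = id the pull-back nu = f^{-1}(mu) is mu twisted by the weights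
   w_i = f2(i): nu(B) = mu(B) + sum_{i in B} w_i, and o as well as every i with
   w_i = oo is a loop of nu.  Twisting translates every circuit vector by a
   constant, so a point x of trop(nu) is oo off the support S of w and equals
   w + z on S, where z satisfies the circuit conditions of mu inside S.  The
   inclusion of val(A) (.) trop(mu) is then immediate.  The other inclusion needs
   every such z to extend to a point of trop(mu), i.e. the projection of trop(mu)
   to a spanning set S is the tropical linear space of mu restricted to S.  The
   extension is the tropical combination of the fundamental cocircuits of a
   suitably optimal basis J inside S, and it lies in trop(mu) by tropical
   orthogonality of circuits and cocircuits.  Part (ii) is part (i) for the
   identity map with weights val(A_ii). *)

From HB Require Import structures.
From mathcomp Require Import all_boot all_order all_algebra.
From mathcomp Require Import reals.
From mathcomp Require Import lra.
Set Implicit Arguments. Unset Strict Implicit. Unset Printing Implicit Defensive.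
Import Order.TTheory GRing.Theory Num.Theory.
Local Open Scope ring_scope.

Section TropicalArithmetic.
Variable R : realType.
Local Notation T := (option R).

Lemma taddC : commutative (@tadd R).
Proof. by case=> [a|] [b|] //=; rewrite addrC. Qed.

Lemma taddA : associative (@tadd R).
Proof. by case=> [a|] [b|] [c|] //=; rewrite addrA. Qed.

Lemma tadd0 : left_id (Some 0) (@tadd R).
Proof. by case=> [a|] //=; rewrite add0r. Qed.

HB.instance Definition _ :=
  Monoid.isComLaw.Build T (Some 0) (@tadd R) taddA taddC tadd0.

Lemma taddNr (a : T) : tadd a None = None.
Proof. by case: a. Qed.

Lemma taddCA : left_commutative (@tadd R).
Proof. by move=> a b c; rewrite !taddA [tadd a b]taddC. Qed.

Lemma tadd_neq_None (a b : T) : tadd a b != None -> a != None /\ b != None.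
Proof. by case: a b => [a|] [b|]. Qed.

Lemma tle_refl (a : T) : tle a a.
Proof. by case: a => //= a; rewrite lexx. Qed.

Lemma tle_trans (a b c : T) : tle a b -> tle b c -> tle a c.
Proof. by case: a b c => [a|] [b|] [c|] //=; apply: le_trans. Qed.

Lemma tle_total (a b : T) : tle a b || tle b a.
Proof. by case: a b => [a|] [b|] //=; apply: le_total. Qed.

Lemma tle_anti (a b : T) : tle a b -> tle b a -> a = b.
Proof.
by case: a b => [a|] [b|] //= ab ba; congr Some; apply/eqP; rewrite eq_le ab ba.
Qed.

Lemma tleN (a : T) : tle a None.
Proof. by case: a. Qed.

Lemma tleN_eq (a : T) : tle None a -> a = None.
Proof. by case: a. Qed.

Lemma tle_neq_None (a b : T) : tle a b -> b != None -> a != None.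
Proof. by case: a b => [a|] [b|]. Qed.

Lemma tle_add2l (a b c : T) : tle a b -> tle (tadd c a) (tadd c b).
Proof. by case: a b c => [a|] [b|] [c|] //=; rewrite lerD2l. Qed.

Lemma tle_add2lK (c : R) (a b : T) :
  tle (tadd (Some c) a) (tadd (Some c) b) -> tle a b.
Proof. by case: a b => [a|] [b|] //=; rewrite lerD2l. Qed.

Lemma tadd_inj (c : R) : injective (tadd (Some c)).
Proof. by case=> [a|] [b|] //= [] /addrI ->. Qed.

Lemma tminC : commutative (@tmin R).
Proof.
move=> a b; rewrite /tmin; case: (boolP (tle a b)) => ab; case: (boolP (tle b a)) => ba //.
  exact: tle_anti.
by move: (tle_total a b); rewrite (negbTE ab) (negbTE ba).
Qed.

Lemma tmin_l (a b : T) : tle (tmin a b) a.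
Proof.
rewrite /tmin; case: ifP => ab; first exact: tle_refl.
by move: (tle_total a b); rewrite ab.
Qed.

Lemma tmin_r (a b : T) : tle (tmin a b) b.
Proof. by rewrite tminC; apply: tmin_l. Qed.

Lemma tmin_glb (a b c : T) : tle c a -> tle c b -> tle c (tmin a b).
Proof. by rewrite /tmin; case: ifP. Qed.

Lemma tminA : associative (@tmin R).
Proof.
move=> a b c; apply: tle_anti; repeat apply: tmin_glb;
  by [ apply: tmin_l | apply: tmin_r | apply: tle_trans (tmin_l _ _) _;
       by [apply: tmin_l | apply: tmin_r] | apply: tle_trans (tmin_r _ _) _;
       by [apply: tmin_l | apply: tmin_r] ].
Qed.

Lemma tminN : left_id None (@tmin R).
Proof. by case. Qed.

HB.instance Definition _ :=
  Monoid.isComLaw.Build T None (@tmin R) tminA tminC tminN.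

Section BigTropical.
Variable I : finType.
Implicit Types (P : pred I) (F : I -> T).

Lemma big_tmin_le P F i : P i -> tle (\big[@tmin R/None]_(j | P j) F j) (F i).
Proof. by move=> Pi; rewrite (bigD1 i) //=; apply: tmin_l. Qed.

Lemma big_tmin_glb P F a : (forall j, P j -> tle a (F j)) ->
  tle a (\big[@tmin R/None]_(j | P j) F j).
Proof. by move=> h; elim/big_ind: _ => //; [apply: tleN | move=> x y; apply: tmin_glb]. Qed.

Lemma big_tmin_eq P F i a : P i -> F i = a -> (forall j, P j -> tle a (F j)) ->
  \big[@tmin R/None]_(j | P j) F j = a.
Proof. by move=> Pi <- h; apply: tle_anti; [apply: big_tmin_le | apply: big_tmin_glb]. Qed.

Lemma ex_tmin P F : (exists i, P i) -> exists i, P i /\ forall j, P j -> tle (F i) (F j).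
Proof.
move=> [i0 Pi0].
have [k [Pk Fk]] : exists k, P k /\ tle (F k) (\big[@tmin R/None]_(j | P j) F j).
  elim/big_rec: _ => [|i x Pi [k [Pk Fk]]]; first by exists i0; split; last exact: tleN.
  rewrite /tmin; case: ifP => _; first by exists i; rewrite tle_refl.
  by exists k.
by exists k; split=> // j Pj; apply: tle_trans Fk (big_tmin_le F Pj).
Qed.

Lemma big_tadd_None P F i : P i -> F i = None -> \big[@tadd R/Some 0]_(j | P j) F j = None.
Proof. by move=> Pi Fi; rewrite (bigD1 i) //= Fi. Qed.

Lemma big_tadd_neq_None P F : (forall i, P i -> F i != None) ->
  \big[@tadd R/Some 0]_(j | P j) F j != None.
Proof. by move=> h; elim/big_ind: _ => //; case=> [x|] [y|]. Qed.

End BigTropical.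

Section MinTwice.
Variable E : finType.
Implicit Type g : E -> T.

Lemma min_twice_other g u : min_twice g -> exists2 e, e != u & forall f, tle (g e) (g f).
Proof.
case=> e1 [e2 [e12 g12 gmin]]; have [e1u|] := eqVneq e1 u; last by exists e1.
by exists e2; [rewrite -e1u eq_sym | rewrite -g12].
Qed.

Lemma min_twice_None g (e1 e2 : E) : e1 != e2 -> (forall e, g e = None) -> min_twice g.
Proof. by move=> e12 gN; exists e1, e2; split=> [||e]; rewrite ?gN. Qed.

Lemma eq_min_twice g1 g2 : g1 =1 g2 -> min_twice g1 -> min_twice g2.
Proof. by move=> g12 [e1 [e2 [e12 g1e g1min]]]; exists e1, e2; split=> [||e]; rewrite -?g12. Qed.

Lemma min_twice_shift g c : min_twice (fun e => tadd (Some c) (g e)) <-> min_twice g.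
Proof.
split=> -[e1 [e2 [e12 g12 gmin]]]; exists e1, e2; split=> //.
- exact: tadd_inj g12.
- by move=> e; apply: tle_add2lK (gmin e).
- by rewrite g12.
- by move=> e; apply: tle_add2l.
Qed.

Lemma min_twice_Some (G : option E -> T) :
  G None = None -> (exists i, G (Some i) != None) -> min_twice G -> min_twice (G \o Some).
Proof.
move=> GN [i Gi] [e1 [e2 [e12 G12 Gmin]]].
have G1 : G e1 != None := tle_neq_None (Gmin _) Gi.
case: e1 e12 G12 Gmin G1 => [a|]; last by rewrite GN.
case: e2 => [b|] ab Gab Gmin Ga; last by move: Ga; rewrite Gab GN.
exists a, b; split=> [|//|f]; last exact: Gmin.
by apply: contraNneq ab => ->.
Qed.

Lemma min_twice_option (G : option E -> T) :
  G None = None -> min_twice (G \o Some) -> min_twice G.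
Proof.
move=> GN [a [b [ab Gab Gmin]]]; exists (Some a), (Some b); split=> //.
by case=> [f|]; [apply: Gmin | rewrite GN tleN].
Qed.

End MinTwice.

End TropicalArithmetic.

Section SetExchange.
Variable E : finType.
Implicit Types (A H I : {set E}) (a b : E).

Lemma cardsU1_notin A a : a \notin A -> #|A :|: [set a]| = #|A|.+1.
Proof. by move=> aA; rewrite setUC cardsU1 aA. Qed.

Lemma cardsD1_in A a : a \in A -> #|A| = #|A :\ a|.+1.
Proof. by move=> aA; rewrite (cardsD1 a) aA. Qed.

Lemma setU1D1K H a b : a \notin H -> ((H :|: [set a]) :\ a) :|: [set b] = H :|: [set b].
Proof. by move=> aH; rewrite [H :|: _]setUC setU1K. Qed.

Lemma setD1D1U1 I a b : a \in I -> b != a -> ((I :\ a) :\ b) :|: [set a] = I :\ b.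
Proof.
move=> aI ba; apply/setP => x; rewrite !inE.
by have [->|_] := eqVneq x a; rewrite ?orbT ?orbF // eq_sym ba aI.
Qed.

Lemma setU1D1 A a b : a != b -> (A :|: [set b]) :\ a = (A :\ a) :|: [set b].
Proof.
move=> ab; apply/setP => x; rewrite !inE.
by have [->|_] := eqVneq x b; rewrite ?orbT ?orbF // eq_sym ab.
Qed.

End SetExchange.

Section ImsetSome.
Variable E : finType.
Implicit Type A : {set E}.

Lemma mem_imset_Some A j : (Some j \in Some @: A) = (j \in A).
Proof. by rewrite mem_imset //; apply: Some_inj. Qed.

Lemma None_notin_imset_Some A : None \notin Some @: A.
Proof. by apply/imsetP => -[]. Qed.

Lemma imset_SomeD1 A i : (Some @: A) :\ Some i = Some @: (A :\ i).
Proof.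
apply/setP => -[j|]; last by rewrite in_setD1 !(negbTE (None_notin_imset_Some _)) andbF.
by rewrite in_setD1 !mem_imset_Some in_setD1.
Qed.

Lemma imset_Some_preimset (B : {set option E}) : None \notin B ->
  B = Some @: [set i | Some i \in B].
Proof.
move=> NB; apply/setP => -[j|]; first by rewrite mem_imset_Some inE.
by rewrite (negbTE NB) (negbTE (None_notin_imset_Some _)).
Qed.

Lemma card_imset_Some A : #|Some @: A| = #|A|.
Proof. by apply: card_imset; apply: Some_inj. Qed.

End ImsetSome.

Section Orthogonality.
Variable R : realType.
Local Notation T := (option R).
Variables (E : finType) (r : nat) (mu : {set E} -> T).
Hypothesis hmu : valuated_matroid r mu.

Definition cocirc (H : {set E}) (f : E) : T :=
  if f \in H then None else mu (H :|: [set f]).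

Lemma circ_cocirc_orthogonal (I H : {set E}) (f1 : E) :
  #|I| = r.+1 -> #|H|.+1 = r ->
  let G f := tadd (circ mu I f) (cocirc H f) in
  G f1 != None -> (forall f, tle (G f1) (G f)) -> exists2 f2, f2 != f1 & G f2 = G f1.
Proof.
move=> hI hH G Gf1 G_ge.
have f1I : f1 \in I by apply: contraTT Gf1 => /negbTE f1I; rewrite /G /circ f1I.
have f1H : f1 \notin H.
  by apply: contraTT Gf1 => /negPn f1H; rewrite /G /cocirc f1H taddNr.
have Hf1r : #|H :|: [set f1]| = r by rewrite cardsU1_notin.
have If1r : #|I :\ f1| = r by apply/eqP; rewrite -eqSS -hI (cardsD1_in f1I).
have f1D : f1 \in (H :|: [set f1]) :\: (I :\ f1) by rewrite !inE eqxx /= orbT.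
have [j /setDP [/setD1P [jf1 jI] jH] exch] := hmu.2 _ _ Hf1r If1r f1 f1D.
have {}jH : j \notin H by apply: contra jH => jH; rewrite inE jH.
rewrite setU1D1K // setD1D1U1 // in exch.
have GE f : f \in I -> f \notin H -> G f = tadd (mu (H :|: [set f])) (mu (I :\ f)).
  by move=> fI fH; rewrite /G /circ /cocirc fI (negbTE fH) taddC.
exists j => //; apply: tle_anti; last exact: G_ge.
by rewrite (GE _ jI jH) (GE _ f1I f1H).
Qed.

End Orthogonality.

Section TropicalSpaceFacts.
Variable R : realType.
Local Notation T := (option R).
Variables (E : finType) (r : nat) (nu : {set E} -> T) (x : E -> T).
Hypothesis x_trop : trop_space r nu x.

Lemma trop_space_min_twice (I : {set E}) : #|I| = r.+1 ->
  (exists e, tadd (circ nu I e) (x e) != None) ->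
  min_twice (fun e => tadd (circ nu I e) (x e)).
Proof.
by move=> Ir [e /tadd_neq_None [ce _]]; apply: x_trop.2 => //; exists e; apply/eqP.
Qed.

Lemma trop_space_loop (B : {set E}) u : #|B| = r -> nu B != None -> u \notin B ->
  (forall f, f \in B -> nu ((B :|: [set u]) :\ f) = None) -> x u = None.
Proof.
move=> Br Bf uB u_loop; case xu: (x u) => [a|] //; exfalso.
pose I := B :|: [set u].
have Ir : #|I| = r.+1 by rewrite cardsU1_notin // Br.
have cu : circ nu I u = nu B by rewrite /circ /I !inE eqxx orbT [B :|: _]setUC setU1K.
have [|e eu e_min] := min_twice_other u (trop_space_min_twice Ir _).
  by exists u; rewrite cu xu; case: (nu B) Bf.
have := tle_neq_None (e_min u); rewrite cu xu; case: (nu B) Bf => // b _ /(_ isT).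
rewrite /circ; case: ifP => // eI.
have eB : e \in B by move: eI; rewrite /I !inE (negbTE eu) orbF.
by rewrite u_loop.
Qed.

Lemma trop_space_basis_support (J : {set E}) : #|J| = r -> nu J != None ->
  exists2 i, i \in J & x i != None.
Proof.
move=> Jr Jf; case: x_trop => -[e0 xe0] _.
have [e0J|e0J] := boolP (e0 \in J); first by exists e0 => //; apply/eqP.
pose I := J :|: [set e0].
have Ir : #|I| = r.+1 by rewrite cardsU1_notin // Jr.
have ce0 : circ nu I e0 = nu J by rewrite /circ /I !inE eqxx orbT [J :|: _]setUC setU1K.
have Ge0 : tadd (circ nu I e0) (x e0) != None.
  by rewrite ce0; case: (nu J) Jf => // a _; case: (x e0) xe0.
have [e ee0 e_min] := min_twice_other e0 (trop_space_min_twice Ir (ex_intro _ e0 Ge0)).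
have := tle_neq_None (e_min e0) Ge0; rewrite /circ; case: ifP => // eI.
case/tadd_neq_None => _ xe; exists e => //.
by move: eI; rewrite !inE (negbTE ee0) orbF.
Qed.

End TropicalSpaceFacts.

Section Lift.
Variable R : realType.
Local Notation T := (option R).
Variables (E : finType) (r : nat) (mu : {set E} -> T).
Hypothesis hmu : valuated_matroid r mu.
Variables (S : {set E}) (zS : E -> T).
Hypothesis zS_circ : forall I : {set E}, I \subset S -> #|I| = r.+1 ->
  (exists i, tadd (circ mu I i) (zS i) != None) ->
  min_twice (fun i => tadd (circ mu I i) (zS i)).

Let F := [set i in S | zS i == None].
(* zr and mr read off finite values; the junk value 0 is never used at oo. *)
Let zr i := odflt 0 (zS i).
Let mr J := odflt 0 (mu J).
Let basis_in (J : {set E}) := [&& J \subset S, #|J| == r & mu J != None].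
Let weight (J : {set E}) := mr J - \sum_(g in J :\: F) zr g.

Lemma zS_Some i : i \in S -> i \notin F -> zS i = Some (zr i).
Proof. by move=> iS; rewrite inE iS /= /zr; case: (zS i). Qed.

Lemma zS_None i : i \in F -> zS i = None.
Proof. by rewrite inE => /andP [_ /eqP]. Qed.

(* Membership rewriting that, unlike inE, leaves F folded. *)
Local Definition setE := (in_setI, in_setU, in_setD1, in_setD, in_set1).

Section OptimalBasis.
(* J meets the oo-coordinates F of zS as much as possible and then minimises
   mu J - sum zS over J \ F; this is what makes lift_vec agree with zS off J. *)
Variable J : {set E}.
Hypothesis J_basis : basis_in J.
Hypothesis J_maxF : forall J', basis_in J' -> (#|J' :&: F| <= #|J :&: F|)%N.
Hypothesis J_min_weight : forall J', basis_in J' -> #|J' :&: F| = #|J :&: F| ->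
  weight J <= weight J'.

Definition lift_vec f : T :=
  \big[@tmin R/None]_(g in J :\: F) tshift (zr g - mr J) (cocirc mu (J :\ g)) f.

Lemma optimal_sub : J \subset S.
Proof. by case/and3P: J_basis. Qed.

Lemma optimal_card : #|J| = r.
Proof. by case/and3P: J_basis => _ /eqP. Qed.

Lemma optimal_mu : mu J = Some (mr J).
Proof. by case/and3P: J_basis => _ _; rewrite /mr; case: (mu J). Qed.

Lemma card_exchange g i : g \in J -> i \notin J -> #|(J :\ g) :|: [set i]| = r.
Proof.
move=> gJ iJ; rewrite cardsU1_notin ?setE ?(negbTE iJ) ?andbF //.
by rewrite -optimal_card (cardsD1_in gJ).
Qed.

Lemma basis_exchange g i : g \in J -> i \in S -> i \notin J ->
  mu ((J :\ g) :|: [set i]) != None -> basis_in ((J :\ g) :|: [set i]).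
Proof.
move=> gJ iS iJ mu_f; rewrite /basis_in card_exchange // eqxx mu_f andbT /=.
by rewrite subUset sub1set iS andbT (subset_trans (subD1set J g) optimal_sub).
Qed.

Lemma lift_term_diag i : i \in J ->
  tshift (zr i - mr J) (cocirc mu (J :\ i)) i = Some (zr i).
Proof.
move=> iJ; rewrite /tshift /cocirc !setE eqxx /= setUC setD1K // optimal_mu /=.
by rewrite subrK.
Qed.

Lemma lift_J_notF i : i \in J -> i \notin F -> lift_vec i = zS i.
Proof.
move=> iJ iF; rewrite zS_Some ?(subsetP optimal_sub) //.
apply: (big_tmin_eq (i := i)); [by rewrite setE iF iJ | exact: lift_term_diag |].
move=> g /setDP [gJ _]; have [->|gi] := eqVneq g i.
  by rewrite lift_term_diag // tle_refl.
by rewrite /tshift /cocirc !setE eq_sym gi iJ taddNr tleN.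
Qed.

Lemma lift_J_F i : i \in J -> i \in F -> lift_vec i = None.
Proof.
move=> iJ iF; apply: big1 => g /setDP [_ gF].
have ig : i != g by apply: contraNneq gF => <-.
by rewrite /tshift /cocirc !setE ig iJ taddNr.
Qed.

Lemma lift_notJ_F i : i \in S -> i \notin J -> i \in F -> lift_vec i = None.
Proof.
move=> iS iJ iF; apply: big1 => g /setDP [gJ gF].
rewrite /tshift /cocirc !setE (negbTE iJ) andbF /=.
case mu_f: (mu _) => [a|] //; exfalso.
have JF : ((J :\ g) :|: [set i]) :&: F = (J :&: F) :|: [set i].
  apply/setP => x; rewrite !setE; have [->|_] := eqVneq x i; first by rewrite !orbT iF.
  by have [->|_] := eqVneq x g; rewrite ?(negbTE gF) ?andbF ?orbF.
have JiB : basis_in ((J :\ g) :|: [set i]) by apply: basis_exchange; rewrite ?mu_f.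
by have := J_maxF JiB; rewrite JF cardsU1_notin ?ltnn // !setE (negbTE iJ).
Qed.

Lemma weight_exchange h i : h \in J -> h \notin F -> i \in S -> i \notin J -> i \notin F ->
  tle (Some (mr J + zr i)) (tadd (mu ((J :\ h) :|: [set i])) (Some (zr h))).
Proof.
move=> hJ hF iS iJ iF; case mu_f: (mu _) => [a|] //=.
have JhiF : ((J :\ h) :|: [set i]) :&: F = J :&: F.
  apply/setP => x; rewrite !setE; have [->|_] := eqVneq x i.
    by rewrite (negbTE iF) (negbTE iJ) !andbF.
  by have [->|_] := eqVneq x h; rewrite ?(negbTE hF) ?andbF ?orbF.
have JhiDF : ((J :\ h) :|: [set i]) :\: F = i |: ((J :\: F) :\ h).
  apply/setP => x; rewrite !setE; have [->|_] := eqVneq x i; first by rewrite iF !orbT.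
  by rewrite orbF /= andbCA.
have JhiB : basis_in ((J :\ h) :|: [set i]) by apply: basis_exchange; rewrite ?mu_f.
have := J_min_weight JhiB; rewrite JhiF => /(_ erefl); rewrite /weight {2}/mr mu_f JhiDF.
rewrite big_setU1 /=; last by rewrite !setE (negbTE iJ) !andbF.
rewrite [\sum_(g in J :\: F) _](big_setD1 h) /=; last by rewrite !setE hF hJ.
by move=> ?; lra.
Qed.

Lemma lift_notJ_notF i : i \in S -> i \notin J -> i \notin F -> lift_vec i = zS i.
Proof.
move=> iS iJ iF; rewrite zS_Some //.
pose I := J :|: [set i]; pose G f := tadd (circ mu I f) (zS f).
have Gi : G i = Some (mr J + zr i).
  by rewrite /G /circ /I !setE eqxx orbT setUC setU1K // optimal_mu zS_Some.
have G_ge f : tle (G i) (G f).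
  rewrite Gi; have [->|fi] := eqVneq f i; first by rewrite Gi tle_refl.
  rewrite /G /circ; case: (boolP (f \in I)) => fI; last exact: tleN.
  have fJ : f \in J by move: fI; rewrite !setE (negbTE fi) orbF.
  rewrite setU1D1 //; case: (boolP (f \in F)) => fF; first by rewrite zS_None // taddNr tleN.
  by rewrite zS_Some ?(subsetP optimal_sub) //; apply: weight_exchange.
have IS : I \subset S by rewrite subUset optimal_sub sub1set iS.
have Ir : #|I| = r.+1 by rewrite cardsU1_notin // optimal_card.
have [e ei e_min] : exists2 e, e != i & forall f, tle (G e) (G f).
  by apply/min_twice_other/(zS_circ IS Ir); exists i; rewrite -/(G i) Gi.
have Ge : G e = Some (mr J + zr i) by apply: tle_anti; rewrite -Gi; [exact: e_min | exact: G_ge].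
have eI : e \in I by apply/negPn/negP => eI; move: Ge; rewrite /G /circ (negbTE eI).
have eJ : e \in J by move: eI; rewrite !setE (negbTE ei) orbF.
have eF : e \notin F by apply/negP => /zS_None eF; move: Ge; rewrite /G eF taddNr.
move: Ge; rewrite /G /circ eI /I setU1D1 // zS_Some ?(subsetP optimal_sub) //.
case mu_e: (mu _) => [a|] //= [Ee].
apply: (big_tmin_eq (i := e)); first by rewrite !setE eF eJ.
  by rewrite /tshift /cocirc !setE (negbTE iJ) andbF mu_e /=; congr Some; lra.
move=> g /setDP [gJ gF]; rewrite /tshift /cocirc !setE (negbTE iJ) andbF /=.
by have := weight_exchange gJ gF iS iJ iF; case: (mu _) => [b|] //=; lra.
Qed.

Lemma lift_eq i : i \in S -> lift_vec i = zS i.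
Proof.
move=> iS; case: (boolP (i \in J)) => iJ; case: (boolP (i \in F)) => iF.
- by rewrite lift_J_F // zS_None.
- exact: lift_J_notF.
- by rewrite lift_notJ_F // zS_None.
- exact: lift_notJ_notF.
Qed.


Lemma lift_trop h0 : h0 \in S -> zS h0 != None -> trop_space r mu lift_vec.
Proof.
move=> h0S h0f; have z_h0 : lift_vec h0 != None by rewrite lift_eq.
have [g0 g0JF] : exists g0, g0 \in J :\: F.
  by apply/set0Pn; apply: contraNneq z_h0 => JF0; rewrite /lift_vec JF0 big_set0.
split=> [|I Ir _]; first by exists h0; apply/eqP.
pose G f := tadd (circ mu I f) (lift_vec f).
have [fs [_ fs_min]] := ex_tmin (P := predT) G (ex_intro _ h0 isT).
have [GN|Gfs] := eqVneq (G fs) None.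
  have : (1 < #|I|)%N.
    by rewrite Ir ltnS -optimal_card; apply/card_gt0P; exists g0; case/setDP: g0JF.
  case/card_gt1P => e1 [e2 [_ _ e12]]; apply: (min_twice_None e12) => f.
  by apply: tleN_eq; rewrite -GN; apply: fs_min.
have [gs [gsJF gs_min]] := ex_tmin (P := mem (J :\: F))
  (fun g => tshift (zr g - mr J) (cocirc mu (J :\ g)) fs) (ex_intro _ g0 g0JF).
have z_fs : lift_vec fs = tshift (zr gs - mr J) (cocirc mu (J :\ gs)) fs.
  exact: (big_tmin_eq (i := gs)).
pose H f := tadd (circ mu I f) (cocirc mu (J :\ gs) f).
have G_le f : tle (G f) (tadd (Some (zr gs - mr J)) (H f)).
  by rewrite /H taddCA; apply/tle_add2l/big_tmin_le.
have G_fs : G fs = tadd (Some (zr gs - mr J)) (H fs) by rewrite /G z_fs /tshift taddCA.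
have H_min f : tle (H fs) (H f).
  by apply: (@tle_add2lK _ (zr gs - mr J)); rewrite -G_fs; apply: tle_trans (fs_min f isT) (G_le f).
have Hfs : H fs != None by move: Gfs; rewrite G_fs; case: (H fs).
have gsJ : #|J :\ gs|.+1 = r by case/setDP: gsJF => gsJ _; rewrite -(cardsD1_in gsJ) optimal_card.
have [f2 f2fs Hf2] : exists2 f2, f2 != fs & H f2 = H fs :=
  circ_cocirc_orthogonal hmu Ir gsJ Hfs H_min.
exists fs, f2; split; [by rewrite eq_sym | | by move=> f; apply: fs_min].
by apply: tle_anti; [apply: fs_min | apply: tle_trans (G_le f2) _; rewrite Hf2 -G_fs tle_refl].
Qed.

End OptimalBasis.

Lemma exists_optimal_basis J0 : basis_in J0 -> exists J, [/\ basis_in J,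
  forall J', basis_in J' -> (#|J' :&: F| <= #|J :&: F|)%N &
  forall J', basis_in J' -> #|J' :&: F| = #|J :&: F| -> weight J <= weight J'].
Proof.
move=> J0B; case: (arg_maxnP (fun J => #|J :&: F|) J0B) => J1 J1B J1max.
pose P := [pred J | basis_in J && (#|J :&: F| == #|J1 :&: F|)].
have J1P : P J1 by rewrite /P /= J1B eqxx.
case: (arg_minP (P := P) weight J1P) => J /andP [JB /eqP JF] Jmin.
exists J; split=> // [J' J'B|J' J'B J'F]; first by rewrite JF; apply: J1max.
by apply: Jmin; rewrite /P /= J'B J'F JF eqxx.
Qed.

Theorem trop_space_lift (J0 : {set E}) (h0 : E) : J0 \subset S -> #|J0| = r -> mu J0 != None ->
  h0 \in S -> zS h0 != None -> exists2 z, trop_space r mu z & {in S, z =1 zS}.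
Proof.
move=> J0S J0r J0f h0S h0f.
have [|J [JB J_maxF J_min]] := @exists_optimal_basis J0; first by rewrite /basis_in J0S J0r eqxx.
exists (lift_vec J); [exact: lift_trop h0S h0f | exact: lift_eq].
Qed.

End Lift.

Section Pullback.
Variable R : realType.
Local Notation T := (option R).
Variables (n r : nat) (mu : {set 'I_n} -> T).
Hypothesis hmu : valuated_matroid r mu.
Variables (f1 : option 'I_n -> option 'I_n) (f2 : option 'I_n -> T).
Hypothesis f1_id : forall i, f1 i = i.
Local Notation nu := (preimage r mu f1 f2).
Local Notation w i := (f2 (Some i)).
Local Notation wsum K := (\big[@tadd R/Some 0]_(i in K) w i).

Lemma preimageE (B : {set option 'I_n}) :
  nu B = tadd (pointed r mu B) (\big[@tadd R/Some 0]_(j in B) f2 j).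
Proof. by rewrite /preimage (eq_imset _ f1_id) imset_id. Qed.

Lemma preimage_None (B : {set option 'I_n}) : None \in B -> nu B = None.
Proof. by move=> NB; rewrite preimageE /pointed NB. Qed.

Lemma preimage_w_None (B : {set option 'I_n}) i : Some i \in B -> w i = None -> nu B = None.
Proof. by move=> iB wi; rewrite preimageE (big_tadd_None iB wi) taddNr. Qed.

Lemma preimage_imset_Some (K : {set 'I_n}) : #|K| = r -> nu (Some @: K) = tadd (mu K) (wsum K).
Proof.
move=> Kr; rewrite preimageE /pointed (negbTE (None_notin_imset_Some K)) card_imset_Some Kr eqxx /=.
have -> : [set i | Some i \in Some @: K] = K by apply/setP => i; rewrite inE mem_imset_Some.
by rewrite big_imset //=; apply: in2W; apply: Some_inj.
Qed.

Lemma circ_preimage_imset (I : {set 'I_n}) (x : option 'I_n -> T) (z : 'I_n -> T) :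
  #|I| = r.+1 -> {in I, forall i, x (Some i) = tadd (w i) (z i)} ->
  forall i, tadd (circ nu (Some @: I) (Some i)) (x (Some i)) =
            tadd (wsum I) (tadd (circ mu I i) (z i)).
Proof.
move=> Ir xI i; rewrite /circ mem_imset_Some; case: ifP => iI; last by rewrite taddNr.
have I'r : #|I :\ i| = r by apply/eqP; rewrite -eqSS -Ir (cardsD1_in iI).
rewrite imset_SomeD1 preimage_imset_Some // xI // (big_setD1 i iI) /=.
rewrite -!taddA [tadd (wsum _) (tadd (w i) _)]taddCA !(taddCA (w i)).
by rewrite [tadd (wsum _) (tadd (mu _) _)]taddCA.
Qed.

Lemma min_twice_preimage_circ (I : {set 'I_n}) (x : option 'I_n -> T) (z : 'I_n -> T) :
  #|I| = r.+1 -> wsum I != None -> x None = None ->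
  {in I, forall i, x (Some i) = tadd (w i) (z i)} ->
  (exists i, tadd (circ mu I i) (z i) != None) ->
  min_twice (fun o => tadd (circ nu (Some @: I) o) (x o)) <->
  min_twice (fun i => tadd (circ mu I i) (z i)).
Proof.
move=> Ir wsf xN xI [i gi]; case ws: (wsum I) wsf => [c|] // _.
pose G o := tadd (circ nu (Some @: I) o) (x o).
have G_Some j : G (Some j) = tadd (Some c) (tadd (circ mu I j) (z j)).
  by rewrite /G (circ_preimage_imset Ir xI) ws.
have GN : G None = None by rewrite /G xN taddNr.
rewrite -(min_twice_shift (fun j => tadd (circ mu I j) (z j)) c); split=> [G_mt|g_mt].
  apply: (eq_min_twice (g1 := G \o Some) G_Some); apply: min_twice_Some GN _ G_mt.
  by exists i; rewrite G_Some; case: (tadd _ _) gi.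
by apply: min_twice_option GN _; apply: eq_min_twice g_mt => j; rewrite /= G_Some.
Qed.

Lemma preimage_basis_of_fin : (forall i, w i != None) ->
  exists B : {set option 'I_n}, #|B| = r /\ nu B <> None.
Proof.
move=> w_fin; case: hmu => -[J0 [J0r J0f]] _.
exists (Some @: J0); rewrite card_imset_Some preimage_imset_Some //; split=> //.
move: (big_tadd_neq_None (P := mem J0) (fun i _ => w_fin i)).
by case: (mu J0) J0f => // a _; case: (\big[_/_]_(_ in _) _).
Qed.

Hypothesis nu_basis : exists B : {set option 'I_n}, #|B| = r /\ nu B <> None.

Lemma preimage_basis : exists J0 : {set 'I_n},
  [/\ #|J0| = r, mu J0 != None, nu (Some @: J0) != None & {in J0, forall i, w i != None}].
Proof.
case: nu_basis => B [Br Bf].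
have NB : None \notin B by apply/negP => /preimage_None.
have B_eq := imset_Some_preimset NB; set J0 := [set i | _] in B_eq.
have J0r : #|J0| = r by rewrite -card_imset_Some -B_eq.
have B_mu : nu B = tadd (mu J0) (wsum J0) by rewrite B_eq preimage_imset_Some.
have [J0f ws_f] : mu J0 != None /\ wsum J0 != None.
  by apply: tadd_neq_None; rewrite -B_mu; apply/eqP.
exists J0; split=> //; first by rewrite -B_eq; apply/eqP.
by move=> i iJ0; apply: contraNneq ws_f; move=> wi; apply/eqP; apply: big_tadd_None iJ0 wi.
Qed.

Lemma trop_preimage_loops (x : option 'I_n -> T) : trop_space r nu x ->
  x None = None /\ forall i, w i = None -> x (Some i) = None.
Proof.
move=> x_trop; have [J0 [J0r _ B0f J0w]] := preimage_basis.
have B0r : #|Some @: J0| = r by rewrite card_imset_Some.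
split=> [|i wi].
  apply: (trop_space_loop x_trop B0r B0f (None_notin_imset_Some J0)) => f fB0.
  apply: preimage_None; rewrite !inE eqxx orbT andbT.
  by apply: contraTneq fB0 => <-; apply: None_notin_imset_Some.
have iJ0 : i \notin J0 by apply/negP => /J0w; rewrite wi.
apply: (trop_space_loop x_trop B0r B0f); first by rewrite mem_imset_Some.
move=> f fB0; apply: (@preimage_w_None _ i) => //; rewrite !inE eqxx orbT andbT.
by apply: contraTneq fB0 => <-; rewrite mem_imset_Some.
Qed.

Lemma trop_preimage_proj (x : option 'I_n -> T) : trop_space r nu x ->
  exists2 z, trop_space r mu z & forall i, x (Some i) = tadd (w i) (z i).
Proof.
move=> x_trop; have [x_None x_w] := trop_preimage_loops x_trop.
have [J0 [J0r J0f _ J0w]] := preimage_basis.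
pose S := [set i | w i != None].
pose zS i := if (w i, x (Some i)) is (Some a, Some b) then Some (b - a) else None.
have x_S i : i \in S -> x (Some i) = tadd (w i) (zS i).
  by rewrite inE /zS; case: (w i) => [a|] // _; case: (x (Some i)) => [b|] //=; rewrite addrC subrK.
have x_notS i : i \notin S -> x (Some i) = None by rewrite inE negbK => /eqP /x_w.
have [h0 h0S zh0] : exists2 h0, h0 \in S & zS h0 != None.
  case: x_trop => -[[h0|] xh0] _; last by rewrite x_None in xh0.
  have h0S : h0 \in S by apply/negPn/negP => /x_notS /xh0.
  by exists h0 => //; move/eqP: xh0; rewrite x_S // => /tadd_neq_None [].
have zS_circ (I : {set 'I_n}) : I \subset S -> #|I| = r.+1 ->
    (exists i, tadd (circ mu I i) (zS i) != None) ->
    min_twice (fun i => tadd (circ mu I i) (zS i)).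
  move=> IS Ir [i gi].
  have ws_f : wsum I != None by apply: big_tadd_neq_None => j /(subsetP IS); rewrite inE.
  have xI : {in I, forall j, x (Some j) = tadd (w j) (zS j)} by move=> j /(subsetP IS) /x_S.
  apply/(min_twice_preimage_circ Ir ws_f x_None xI (ex_intro _ i gi)).
  apply: (trop_space_min_twice x_trop); first by rewrite card_imset_Some.
  exists (Some i); rewrite (circ_preimage_imset Ir xI).
  by case: (wsum I) ws_f => // c _; case: (tadd _ _) gi.
have J0S : J0 \subset S by apply/subsetP => i /J0w; rewrite inE.
have [z z_trop z_S] := trop_space_lift hmu zS_circ J0S J0r J0f h0S zh0.
exists z => // i; have [iS|iS] := boolP (i \in S); first by rewrite z_S // x_S.
by rewrite x_notS //; move: iS; rewrite inE negbK => /eqP ->.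
Qed.

Lemma trop_preimage_ext (z : 'I_n -> T) : trop_space r mu z ->
  trop_space r nu (fun o => if o is Some i then tadd (w i) (z i) else None).
Proof.
set x := fun o => _; move=> z_trop.
have [J0 [J0r J0f _ J0w]] := preimage_basis.
have [e0 e0J0 ze0] := trop_space_basis_support z_trop J0r J0f.
split=> [|I Ir _].
  by exists (Some e0); apply/eqP; move: (J0w e0 e0J0) ze0; rewrite /x; case: (w e0); case: (z e0).
pose G o := tadd (circ nu I o) (x o).
have GN : G None = None by rewrite /G taddNr.
have G_None : (forall o, G o = None) -> min_twice G.
  exact: (min_twice_None (e1 := None) (e2 := Some e0)).
have [NI|NI] := boolP (None \in I).
  apply: G_None => -[i|] //; rewrite /G /circ; case: ifP => // _.
  by rewrite preimage_None // !inE NI andbT.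
have I_eq := imset_Some_preimset NI; set I' := [set i | _] in I_eq.
have I'r : #|I'| = r.+1 by rewrite -card_imset_Some -I_eq.
have xI' : {in I', forall i, x (Some i) = tadd (w i) (z i)} by [].
have G_Some i : G (Some i) = tadd (wsum I') (tadd (circ mu I' i) (z i)).
  by rewrite /G I_eq (circ_preimage_imset I'r xI').
have [ws_N|ws_f] := eqVneq (wsum I') None.
  by apply: G_None => -[i|] //; rewrite G_Some ws_N.
case: (pickP (fun i => tadd (circ mu I' i) (z i) != None)) => [i gi|g_N].
  rewrite /G I_eq; apply/(min_twice_preimage_circ I'r ws_f _ xI' (ex_intro _ i gi)) => //.
  by apply: (trop_space_min_twice z_trop I'r); exists i.
apply: G_None => -[i|] //; rewrite G_Some; move/negbFE/eqP: (g_N i) => ->.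
exact: taddNr.
Qed.

Lemma proj_eq_preimage (K : fieldType) (val : K -> T) (A : 'M[K]_n) :
  val 0 = None -> assoc_matrix val f1 f2 A ->
  proj_eq
    (fun y => exists x, trop_space r nu x /\ forall i, y i = x (Some i))
    (fun y => exists x, trop_space r mu x /\ forall i, y i = trop_act val A x i).
Proof.
move=> val0 hA.
have act x i : trop_act val A x i = tadd (w i) (x i).
  rewrite /trop_act (bigD1 i) //= big1 => [|j ji]; first by rewrite tminC tminN (hA i i).1 ?f1_id.
  by rewrite (hA i j).2 ?val0 // f1_id => -[ij]; rewrite ij eqxx in ji.
split=> y [x [x_trop y_x]]; exists 0, y; (split; last by move=> e; rewrite /tshift tadd0).
  have [z z_trop x_z] := trop_preimage_proj x_trop.
  by exists z; split=> // i; rewrite y_x x_z act.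
by eexists; split; [exact: trop_preimage_ext x_trop | move=> i; rewrite y_x act].
Qed.

End Pullback.

Lemma diag_unit_assoc_map (R : realType) (K : fieldType) (val : K -> option R) (n : nat)
  (A : 'M[K]_n) : is_valuation val -> is_diagonal A -> A \in unitmx ->
  [/\ forall o, assoc_map1 A o = o,
      assoc_matrix val (assoc_map1 A) (assoc_map2 val A) A &
      forall i, assoc_map2 val A (Some i) != None].
Proof.
move=> [val_None _ _] A_diag A_unit.
have A_nz i : A i i != 0.
  apply: contraTneq A_unit => Aii0; rewrite unitmxE unitfE negbK.
  have -> : A = diag_mx (\row_j A j j).
    apply/matrixP => j k; rewrite !mxE; have [->|jk] := eqVneq j k; first by rewrite mulr1n.
    by rewrite A_diag // mulr0n.
  by rewrite det_diag; apply/prodf_eq0; exists i => //; rewrite mxE Aii0.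
have pick_i i : [pick j | A i j != 0] = Some i.
  case: pickP => [j Aij|/(_ i)]; last by rewrite (negbTE (A_nz i)).
  by congr Some; apply: contraNeq Aij => ij; rewrite A_diag // eq_sym.
have map1 o : assoc_map1 A o = o by case: o => [i|] //=; rewrite pick_i.
split=> // [i j|i]; last by rewrite /= pick_i; apply: contra (A_nz i) => /eqP /val_None ->.
rewrite map1; split=> [[<-]|ij]; first by rewrite /= pick_i.
by apply: A_diag; apply/eqP => ji; apply: ij; rewrite ji.
Qed.

Theorem lemma2p23 (R : realType) (K : fieldType) (val : K -> option R)
  (hval : is_valuation val) (n r : nat) (mu : {set 'I_n} -> option R)
  (hmu : valuated_matroid r mu) :
  (* (i) *)
  (forall (f1 : option 'I_n -> option 'I_n) (f2 : option 'I_n -> option R),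
     (forall i, f1 i = i) ->
     (forall i : 'I_n, exists k : K, f2 (Some i) = val k) ->
     (exists B : {set option 'I_n}, #|B| = r /\ preimage r mu f1 f2 B <> None) ->
     forall A : 'M[K]_n, assoc_matrix val f1 f2 A ->
     proj_eq
       (fun y : 'I_n -> option R =>
          exists x, trop_space r (preimage r mu f1 f2) x /\
                    forall i, y i = x (Some i))
       (fun y : 'I_n -> option R =>
          exists x, trop_space r mu x /\ forall i, y i = trop_act val A x i))
  /\
  (* (ii) *)
  (forall A : 'M[K]_n, is_diagonal A -> A \in unitmx ->
     proj_eq
       (fun y : 'I_n -> option R =>
          exists x, trop_space r (preimage r mu (assoc_map1 A) (assoc_map2 val A)) x /\
                    forall i, y i = x (Some i))
       (fun y : 'I_n -> option R =>
          exists x, trop_space r mu x /\ forall i, y i = trop_act val A x i)).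
Proof.
have val0 : val 0 = None by case: hval => /(_ 0) [_ ->].
split=> [f1 f2 f1_id _ nu_basis A hA | A A_diag A_unit].
  exact: proj_eq_preimage.
have [map1 hA map2_fin] := diag_unit_assoc_map hval A_diag A_unit.
by apply: proj_eq_preimage => //; apply: preimage_basis_of_fin.
Qed.
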